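(* Let $n\ge3$, $m=n-1$, $A_1=E_1$, $A_i=E_i+E_{i-1,n}$ for $i=2,\dots,n-1$. Let $i\in\{1,\dots,m-1\}$ and let $(Y_1,\dots,Y_i)$ be a strict facial reduction sequence for $\mathcal S^n_+$ all of whose members lie in $\operatorname{lin}\{A_1,\dots,A_m\}$. Then $$\mathcal S^n_+\cap Y_1^\perp\cap\dots\cap Y_i^\perp=0_i\oplus\mathcal S^{n-i}_+ .$$
   Context: $E_{ij}\in\mathcal S^n$ has only nonzero entries $1$ in positions $(i,j),(j,i)$; $E_i:=E_{ii}$; orthogonality is with respect to $S\bullet T=\operatorname{trace}(ST)$. For a closed convex cone $K$, $K^*=\{y:\langle y,x\rangle\ge0\ \forall x\in K\}$. A facial reduction sequence for $K$ is $(y_1,\dots,y_k)$ such that, with $F_0=K$ and $F_j=F_{j-1}\cap y_j^\perp$, one has $y_j\in F_{j-1}^*$ for all $j$; it is strict if moreover $y_j\in F_{j-1}^*\setminus F_{j-1}^\perp$ for all $j$. $0_i\oplus\mathcal S^{n-i}_+$ denotes matrices whose first $i$ rows and columns are zero and whose lower right $(n-i)\times(n-i)$ block is positive semidefinite. *)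

From HB Require Import structures.
From mathcomp Require Import all_boot all_order all_algebra.
Set Implicit Arguments. Unset Strict Implicit. Unset Printing Implicit Defensive.
Import Order.TTheory GRing.Theory Num.Theory.
Local Open Scope ring_scope.

Section Defs.
Variable R : rcfType.

Definition symmx n (A : 'M[R]_n) : Prop := A^T = A.

Definition psd n (A : 'M[R]_n) : Prop :=
  symmx A /\ forall x : 'cV[R]_n, 0 <= (x^T *m A *m x) 0 0.

Definition frob n (S T : 'M[R]_n) : R := \tr (S *m T).

Definition dual_cone n (K : 'M[R]_n -> Prop) (y : 'M[R]_n) : Prop :=
  symmx y /\ forall x, K x -> 0 <= frob y x.
Definition perp_cone n (K : 'M[R]_n -> Prop) (y : 'M[R]_n) : Prop :=
  symmx y /\ forall x, K x -> frob y x = 0.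

Definition cap_perp n (K : 'M[R]_n -> Prop) (y : 'M[R]_n) : 'M[R]_n -> Prop :=
  fun x => K x /\ frob y x = 0.

Fixpoint strict_fr_seq n (K : 'M[R]_n -> Prop) (ys : seq 'M[R]_n) : Prop :=
  match ys with
  | [::] => True
  | y :: ys' => dual_cone K y /\ ~ perp_cone K y /\ strict_fr_seq (cap_perp K y) ys'
  end.

Fixpoint fr_face n (K : 'M[R]_n -> Prop) (ys : seq 'M[R]_n) : 'M[R]_n -> Prop :=
  match ys with
  | [::] => K
  | y :: ys' => fr_face (cap_perp K y) ys'
  end.

(* E_{ij} with 0-based indices: entries 1 at (i,j) and (j,i); E_{ii} = E_i *)
Definition Emx n (i j : nat) : 'M[R]_n :=
  \matrix_(k, l) ((((k : nat) == i) && ((l : nat) == j))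
                  || (((k : nat) == j) && ((l : nat) == i)))%:R.

(* A_{k+1} of the paper, 0-based k = 0..n-2:
   A_1 = E_1, A_{k+1} = E_{k+1} + E_{k,n} (1-based) *)
Definition Amx n (k : nat) : 'M[R]_n :=
  if k == 0%N then Emx n 0 0 else Emx n k k + Emx n k.-1 n.-1.

Definition in_linA n (Y : 'M[R]_n) : Prop :=
  exists c : 'I_(n.-1) -> R, Y = \sum_(k < n.-1) c k *: Amx n k.

End Defs.

Lemma shift_ord_proof n i (k : 'I_(n - i)) : (k + i < n)%N.
Proof. by rewrite addnC -ltn_subRL. Qed.

Definition shift_ord n i (k : 'I_(n - i)) : 'I_n := Ordinal (shift_ord_proof k).

Definition zero_oplus_psd (R : rcfType) n (i : nat) (X : 'M[R]_n) : Prop :=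
  (forall k l : 'I_n, ((k < i)%N || (l < i)%N) -> X k l = 0) /\
  psd (mxsub (@shift_ord n i) (@shift_ord n i) X).

From mathcomp Require Import all_boot all_order all_algebra.
From mathcomp Require Import zify ring lra.
Set Implicit Arguments. Unset Strict Implicit. Unset Printing Implicit Defensive.
Import Order.TTheory GRing.Theory Num.Theory.
Local Open Scope ring_scope.

(* Induction along the sequence, with invariant F_j = 0_j (+) S^{n-j}_+.  Write
   Y = sum_k c_k A_k with Y in F_j^*.  Testing Y against u u^T for u supported on
   the last n - j coordinates makes its quadratic form nonnegative there; as
   Y_nn = 0, the last row of Y vanishes from column j+1 on, and these entries are
   the coefficients c_k with k > j+1.  Hence <Y, X> = c_{j+1} X_{j+1,j+1} on F_j,
   strictness gives c_{j+1} <> 0, and F_j /\ Y^perp = {X in F_j | X_{j+1,j+1} = 0},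
   which is F_{j+1} because a PSD matrix with a zero diagonal entry has a zero row. *)

Section Faces.
Variables (R : rcfType) (N : nat).
Implicit Types (M X : 'M[R]_N) (u : 'cV[R]_N).

Definition qform M u : R := (u^T *m M *m u) 0 0.

Lemma bilin_delta M (a b : 'I_N) :
  ((delta_mx a (0 : 'I_1))^T *m M *m delta_mx b (0 : 'I_1)) 0 0 = M a b.
Proof. by rewrite trmx_delta -rowE -colE !mxE. Qed.

Lemma qform_scaleD M (a b : 'I_N) (t : R) :
  qform M (t *: delta_mx a (0 : 'I_1) + delta_mx b 0) =
  t ^+ 2 * M a a + t * (M a b + M b a) + M b b.
Proof.
rewrite /qform [_^T]raddfD /= [(_ *: _)^T]linearZ /=.
rewrite !mulmxDl !mulmxDr -!scalemxAl -!scalemxAr.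
by rewrite -!(bilin_delta M) !mxE; ring.
Qed.

Lemma mxtrace_rank1 (u : 'cV[R]_N) (v : 'rV[R]_N) : \tr (u *m v) = (v *m u) 0 0.
Proof. by rewrite mxtrace_mulC /mxtrace big_ord1. Qed.

Lemma frobDl M1 M2 X : frob (M1 + M2) X = frob M1 X + frob M2 X.
Proof. by rewrite /frob mulmxDl mxtraceD. Qed.

Lemma frobZl (t : R) M X : frob (t *: M) X = t * frob M X.
Proof. by rewrite /frob -scalemxAl mxtraceZ. Qed.

Lemma frob_sumZl (I : finType) (c : I -> R) (M : I -> 'M[R]_N) X :
  frob (\sum_k c k *: M k) X = \sum_k c k * frob (M k) X.
Proof.
by rewrite /frob mulmx_suml raddf_sum; apply: eq_bigr => k _; apply: frobZl.
Qed.

Lemma frob_delta (a b : 'I_N) X : frob (delta_mx a b) X = X b a.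
Proof.
by rewrite /frob -(mul_delta_mx (0 : 'I_1)) -mulmxA mxtrace_rank1 -trmx_delta bilin_delta.
Qed.

Lemma frob_rank1 M u : frob M (u *m u^T) = qform M u.
Proof. by rewrite /frob mulmxA mxtrace_rank1 mulmxA. Qed.

Definition supported_from (j : nat) u := forall a : 'I_N, (a < j)%N -> u a 0 = 0.

Lemma offdiag_eq0 j M (p m : 'I_N) : M^T = M ->
  (forall u, supported_from j u -> 0 <= qform M u) ->
  (j <= p)%N -> (j <= m)%N -> M p p = 0 -> M p m = 0.
Proof.
move=> symM qM jp jm Mpp; have Mmp : M m p = M p m by rewrite -{1}symM mxE.
apply/eqP; apply: contraT => Mpm.
have supp t : supported_from j (t *: delta_mx p 0 + delta_mx m 0).
  move=> a aj; rewrite !mxE.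
  have [-> ->] : (a == p) = false /\ (a == m) = false.
    by split; apply/negbTE; apply: contraTneq aj => ->; rewrite -leqNgt.
  by rewrite mulr0 addr0.
(* as M_pp = 0, the form along t e_p + e_m is affine in t with slope 2 M_pm *)
have := qM _ (supp (- (`|M m m| + 1) / (2 * M p m))).
rewrite qform_scaleD Mpp Mmp mulr0 add0r.
have -> : - (`|M m m| + 1) / (2 * M p m) * (M p m + M p m) = - (`|M m m| + 1).
  by field.
by have := ler_norm (M m m); lra.
Qed.

Definition psd_face (j : nat) X :=
  (forall k l : 'I_N, ((k < j)%N || (l < j)%N) -> X k l = 0) /\ psd X.

Lemma psd_face0 X : psd_face 0 X <-> psd X.
Proof. by split=> [[]|] //. Qed.

Lemma psd_face_rank1 j u : supported_from j u -> psd_face j (u *m u^T).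
Proof.
move=> uj; split.
  move=> k l kl; rewrite !mxE big_ord1 !mxE.
  by case/orP: kl => [/uj -> | /uj ->]; rewrite ?mul0r ?mulr0.
split=> [|x]; first by rewrite /symmx trmx_mul trmxK.
rewrite mulmxA -mulmxA mxE big_ord1.
have -> : (u^T *m x) 0 0 = (x^T *m u) 0 0 by rewrite -[u^T *m x]trmxK trmx_mul trmxK mxE.
exact: sqr_ge0.
Qed.

Lemma psd_faceW i j X : (i <= j)%N -> psd_face j X -> psd_face i X.
Proof.
move=> ij [Xj psdX]; split=> // k l kl; apply: Xj.
by case/orP: kl => [ki|li]; rewrite ?(leq_trans ki ij) ?(leq_trans li ij) ?orbT.
Qed.

Lemma psd_faceS (j : 'I_N) X : psd_face j X -> psd_face j.+1 X <-> X j j = 0.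
Proof.
move=> [Xj [symX qX]]; split=> [[Xj1 _]|Xjj]; first by apply: Xj1; rewrite ltnSn.
split=> [k l|]; last by [].
have qX' u : supported_from j u -> 0 <= qform X u by move=> _; apply: qX.
case: (ltnP k j) => [kj _|jk]; first by rewrite Xj ?kj.
case: (ltnP l j) => [lj _|jl]; first by rewrite Xj ?lj ?orbT.
rewrite !ltnS; case/orP=> [kj | lj].
  have -> : k = j by apply/val_inj/eqP; rewrite eqn_leq kj.
  exact: offdiag_eq0 qX' _ jl Xjj.
have -> : l = j by apply/val_inj/eqP; rewrite eqn_leq lj.
have -> : X k j = X j k by move/matrixP: symX => /(_ j k); rewrite mxE.
exact: offdiag_eq0 qX' _ jk Xjj.
Qed.

End Faces.

Lemma mulmx_trmxE (R : pzSemiRingType) N m n (P : 'M[R]_(N, m)) (B : 'M_(m, n))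
  (Q : 'M_(N, n)) (a b : 'I_N) :
  (P *m B *m Q^T) a b = (row a P *m B *m (row b Q)^T) 0 0.
Proof. by rewrite tr_row colE !mulmxA -colE -!row_mul !mxE. Qed.

Section Shift.
Variables (R : rcfType) (N j : nat).
Implicit Types X : 'M[R]_N.
Local Notation s := (@shift_ord N j).

Definition shift_mx : 'M[R]_(N, N - j) := colsub s 1%:M.

Lemma shift_ord_inj : injective s.
Proof. by move=> k l /(congr1 val)/addIn/val_inj. Qed.

Lemma shift_ordP (a : 'I_N) : (j <= a)%N -> exists k, a = s k.
Proof.
move=> ja; have ak : (a - j < N - j)%N by have := ltn_ord a; lia.
by exists (Ordinal ak); apply/val_inj => /=; lia.
Qed.

Lemma row_shift_mx k : row (s k) shift_mx = delta_mx 0 k.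
Proof. by apply/matrixP => i l; rewrite !mxE ord1 eqxx (inj_eq shift_ord_inj) eq_sym. Qed.

Lemma row_shift_mx_eq0 (a : 'I_N) : (a < j)%N -> row a shift_mx = 0.
Proof.
move=> aj; apply/matrixP => ? l; rewrite !mxE; case: eqP => // a_eq.
by move: aj; rewrite a_eq /= ltnNge leq_addl.
Qed.

Lemma mxsub_shift X : mxsub s s X = shift_mx^T *m X *m shift_mx.
Proof. by rewrite trmx_mxsub trmx1 mul_rowsub_mx -mxsub_mul mul1mx mulmx1. Qed.

Lemma shift_mx_mxsub X :
  (forall k l : 'I_N, ((k < j)%N || (l < j)%N) -> X k l = 0) ->
  X = shift_mx *m mxsub s s X *m shift_mx^T.
Proof.
move=> Xj; apply/matrixP => a b; rewrite mulmx_trmxE.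
case: (ltnP a j) => [aj | /shift_ordP [a' ->]].
  by rewrite Xj ?aj // (row_shift_mx_eq0 aj) !mul0mx mxE.
case: (ltnP b j) => [bj | /shift_ordP [b' ->]].
  by rewrite Xj ?bj ?orbT // (row_shift_mx_eq0 bj) trmx0 mulmx0 mxE.
by rewrite !row_shift_mx trmx_delta -[delta_mx 0 a']trmx_delta bilin_delta mxE.
Qed.

End Shift.

Lemma psd_face_zero_oplus_psd (R : rcfType) N j (X : 'M[R]_N) :
  psd_face j X <-> zero_oplus_psd j X.
Proof.
split=> [[Xj [symX qX]] | [Xj [symS qS]]]; split=> //; split.
- by rewrite /symmx trmx_mxsub symX.
- by move=> x; move: (qX (shift_mx R N j *m x)); rewrite mxsub_shift trmx_mul !mulmxA.
- by rewrite /symmx (shift_mx_mxsub Xj) !trmx_mul trmxK symS mulmxA.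
- move=> x; rewrite (shift_mx_mxsub Xj) !mulmxA.
  by move: (qS ((shift_mx R N j)^T *m x)); rewrite trmx_mul trmxK !mulmxA.
Qed.

Ltac decide_eqs :=
  rewrite /=; repeat match goal with |- context [?x == ?y] => case: (x =P y) => ? end;
  rewrite /= ?mulr0n ?mulr1n ?addr0 ?add0r ?mulr0 ?mulr1 //; try lia.

Section LinA.
Variables (R : rcfType) (n : nat).
Local Notation N := n.+1.
Implicit Types X : 'M[R]_N.

Lemma Emx_inord (a b : nat) : (a <= n)%N -> (b <= n)%N ->
  Emx R N a b = Emx R N (inord a : 'I_N) (inord b : 'I_N).
Proof. by move=> an bn; rewrite !inordK. Qed.

Lemma frob_Emx (a b : 'I_N) X : frob (Emx R N a b) X = X b a + (a != b)%:R * X a b.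
Proof.
have -> : Emx R N a b = delta_mx a b + (a != b)%:R *: delta_mx b a.
  apply/matrixP => k l; rewrite !mxE !val_eqE.
  have [<-|ab] := eqVneq a b; first by rewrite orbb /= mul0r addr0.
  rewrite /= mul1r; case: (k =P a) => [->|_] /=; last by rewrite add0r.
  by rewrite (negbTE ab) /= orbF addr0.
by rewrite (frobDl (delta_mx a b)) frobZl !frob_delta.
Qed.

Lemma AmxE (k : nat) (a b : 'I_N) : Amx R N k a b =
  if k == 0%N then ((a == 0 :> nat) && (b == 0 :> nat))%:R
  else ((a == k :> nat) && (b == k :> nat))%:R +
       (((a == k.-1 :> nat) && (b == n :> nat)) || ((a == n :> nat) && (b == k.-1 :> nat)))%:R.
Proof. by rewrite /Amx; case: ifP => _; rewrite !mxE ?orbb. Qed.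

Local Notation wk k := (widen_ord (leqnSn n) k).

Lemma frob_Amx_face j X (k : 'I_n) : psd_face j X -> (k <= j)%N ->
  frob (Amx R N k) X = X (wk k) (wk k).
Proof.
move=> [Xj _] kj; have := ltn_ord k => kn; rewrite /Amx; case: eqP => [k0 | /eqP k0].
  have -> : Emx R N 0 0 = Emx R N (wk k) (wk k) by rewrite /= k0.
  by rewrite frob_Emx eqxx mul0r addr0.
rewrite -[Emx R N k k]/(Emx R N (wk k) (wk k)) (@Emx_inord k.-1 n) //; try lia.
rewrite (frobDl (Emx R N _ _)) !frob_Emx eqxx mul0r addr0.
have k1j : ((inord k.-1 : 'I_N) < j)%N by rewrite inordK; lia.
by rewrite (Xj (inord n) (inord k.-1)) ?k1j ?orbT // (Xj (inord k.-1)) ?k1j // mulr0 !addr0.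
Qed.

Definition linA (c : 'I_n -> R) : 'M[R]_N := \sum_(k < n) c k *: Amx R N k.

Variable c : 'I_n -> R.

Lemma linAE (a b : 'I_N) : linA c a b = \sum_(k < n) c k * Amx R N k a b.
Proof. by rewrite summxE; apply: eq_bigr => k _; rewrite mxE. Qed.

Lemma linA_tr : (linA c)^T = linA c.
Proof.
apply/matrixP => a b; rewrite mxE !linAE; apply: eq_bigr => k _.
by rewrite !AmxE; decide_eqs.
Qed.

Lemma linA_last : (0 < n)%N -> linA c ord_max ord_max = 0.
Proof.
by move=> n_gt0; rewrite linAE big1 // => k _; have := ltn_ord k; rewrite AmxE; decide_eqs.
Qed.

Lemma linA_pred_last (k : 'I_n) : (0 < k)%N -> linA c (inord k.-1) ord_max = c k.
Proof.
move=> k0; have := ltn_ord k => kn.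
rewrite linAE (bigD1 k) //= big1 ?addr0 => [|l /eqP lk]; rewrite AmxE inordK /=; try lia.
  by decide_eqs.
have := ltn_ord l; have : (l : nat) <> k by move=> /val_inj.
by decide_eqs.
Qed.

Lemma linA_diag (k : 'I_n) : linA c (wk k) (wk k) = c k.
Proof.
rewrite linAE (bigD1 k) //= big1 ?addr0 => [|l /eqP lk]; rewrite AmxE.
  by decide_eqs.
have := ltn_ord l; have := ltn_ord k; have : (l : nat) <> k by move=> /val_inj.
by decide_eqs.
Qed.

End LinA.

Section DualFace.
Variables (R : rcfType) (n : nat).
Local Notation N := n.+1.
Local Notation wk k := (widen_ord (leqnSn n) k).

Lemma linA_dual_coef_eq0 j (c : 'I_n -> R) : dual_cone (psd_face j) (linA c) ->
  forall k : 'I_n, (j < k)%N -> c k = 0.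
Proof.
move=> [_ dY] k jk; have := ltn_ord k => kn; have n_gt0 : (0 < n)%N by lia.
have qY u : supported_from j u -> 0 <= qform (linA c) u.
  by move=> uj; rewrite -frob_rank1; apply/dY/psd_face_rank1.
rewrite -linA_pred_last ?(leq_trans _ jk) //.
have -> : linA c (inord k.-1) ord_max = linA c ord_max (inord k.-1).
  by rewrite -[in LHS]linA_tr mxE.
apply: (offdiag_eq0 (linA_tr c) qY) (linA_last c n_gt0); first by rewrite /=; lia.
by rewrite inordK; lia.
Qed.

Lemma frob_linA_face (j : 'I_n) (c : 'I_n -> R) X :
  (forall k : 'I_n, (j < k)%N -> c k = 0) -> psd_face j X ->
  frob (linA c) X = c j * X (wk j) (wk j).
Proof.
move=> c_eq0 fX; rewrite frob_sumZl (bigD1 j) //= (frob_Amx_face fX) // big1 ?addr0 //.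
move=> k kj; case: (ltnP j k) => [jk | kj'].
  by rewrite c_eq0 ?mul0r.
have kj1 : (k < j)%N by rewrite ltn_neqAle kj' andbT val_eqE.
by rewrite (frob_Amx_face fX) ?(ltnW kj1) // (proj1 fX) ?kj1 ?mulr0.
Qed.

Lemma psd_face_cap_perp (j : 'I_n) (Y : 'M[R]_N) : in_linA Y ->
  dual_cone (psd_face j) Y -> ~ perp_cone (psd_face j) Y ->
  forall X, cap_perp (psd_face j) Y X <-> psd_face j.+1 X.
Proof.
move=> [c ->] dY npY X.
have frobY Z : psd_face j Z -> frob (linA c) Z = c j * Z (wk j) (wk j).
  exact/frob_linA_face/linA_dual_coef_eq0.
have cj_neq0 : c j != 0.
  apply/eqP => cj0; apply: npY; split; first exact: linA_tr.
  by move=> Z fZ; rewrite frobY // cj0 mul0r.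
split=> [[fX] | fX1].
  rewrite frobY // => /eqP; rewrite mulf_eq0 (negbTE cj_neq0) => /eqP Xjj.
  exact: (proj2 (@psd_faceS _ _ (wk j) _ fX)).
have fX : psd_face j X by apply: psd_faceW fX1.
by split=> //; rewrite frobY // (proj1 (@psd_faceS _ _ (wk j) _ fX) fX1) mulr0.
Qed.

End DualFace.

Lemma fr_face_psd_face (R : rcfType) n (ys : seq 'M[R]_n.+1) j K :
  (forall X, K X <-> psd_face j X) -> (j + size ys <= n)%N ->
  strict_fr_seq K ys -> {in ys, forall Y, in_linA Y} ->
  forall X, fr_face K ys X <-> psd_face (j + size ys) X.
Proof.
elim: ys j K => [|Y ys IH] j K eqK /=; first by rewrite addn0.
move=> jys [dY [npY sfr]] linY; have jn : (j < n)%N by lia.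
have dY' : dual_cone (psd_face j) Y.
  by case: dY => symY dY; split=> // Z /eqK; apply: dY.
have npY' : ~ perp_cone (psd_face j) Y.
  by move=> [symY pY]; apply: npY; split=> // Z /eqK; apply: pY.
have faceY := psd_face_cap_perp (j := Ordinal jn) (linY _ (mem_head _ _)) dY' npY'.
rewrite -addSnnS; apply: IH => [Z | | | Z ysZ]; last by apply: linY; rewrite in_cons ysZ orbT.
- by rewrite -faceY; split=> -[/eqK KZ YZ].
- by rewrite addSnnS.
- exact: sfr.
Qed.

Theorem claim1 (R : rcfType) (n : nat) (hn : (3 <= n)%N)
  (i : nat) (hi1 : (1 <= i)%N) (hi2 : (i <= n.-1.-1)%N)
  (Ys : seq 'M[R]_n) (hsize : size Ys = i)
  (hstrict : strict_fr_seq (@psd R n) Ys)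
  (hlin : forall Y, Y \in Ys -> in_linA Y) :
  forall X : 'M[R]_n, fr_face (@psd R n) Ys X <-> zero_oplus_psd i X.
Proof.
case: n hn hi2 Ys hsize hstrict hlin => [//|n] _ hi2 ys hsize hstrict hlin X.
rewrite -psd_face_zero_oplus_psd -hsize -[size ys]add0n.
apply: fr_face_psd_face hstrict hlin X => [Z | ]; first exact: iff_sym (psd_face0 Z).
by rewrite add0n hsize; move: hi2 => /=; lia.
Qed.
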